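(* Let $m\ge1$, $q=2^m$, let $n$ be odd, and let $L$ be a $2$-linear polynomial over $\mathbb F_{q^n}$. Then $\mathrm{Tr}(x^{q+1})+L(x)$ is a permutation polynomial of $\mathbb F_{q^n}$ if and only if $L^\prime(\ker\mathrm{Tr})=\ker\mathrm{Tr}$ and the map $x\mapsto L^\prime(x)+x^{1/2}$ induces an automorphism of the additive quotient group $\mathbb F_{q^n}/\ker\mathrm{Tr}$ (via $\ker\mathrm{Tr}+\alpha\mapsto\ker\mathrm{Tr}+L'(\alpha)+\alpha^{1/2}$).
   Context: $\mathrm{Tr}$ denotes the trace map of $\mathbb F_{q^n}$ over $\mathbb F_q$. A $2$-linear polynomial over $\mathbb F_{q^n}$ has the form $\sum_{j=0}^{mn-1}a_jx^{2^j}$, $a_j\in\mathbb F_{q^n}$; its adjoint is $L^\prime(x)=\sum_j(a_jx)^{2^{-j}}$, where $y\mapsto y^{2^{-j}}$ is the inverse of $y\mapsto y^{2^j}$ on $\mathbb F_{q^n}$; $x^{1/2}$ denotes the inverse of the automorphism $x\mapsto x^2$ of $\mathbb F_{q^n}$. Polynomials are regarded as maps on $\mathbb F_{q^n}$. *)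

From mathcomp Require Import all_boot all_order all_algebra all_field.
Set Implicit Arguments. Unset Strict Implicit. Unset Printing Implicit Defensive.
Import GRing.Theory.
Local Open Scope ring_scope.

(* F plays the role of F_{q^n}, q = 2^m, with #|F| = 2^(m*n). *)

Definition Tr (F : finFieldType) (m n : nat) (x : F) : F :=
  \sum_(i < n) x ^+ ((2 ^ m) ^ i).

(* y |-> y^(2^{-j}): inverse of y |-> y^(2^j) on a field with 2^N elements
   (for j < N it is y |-> y^(2^(N-j)), since y^(2^N) = y). *)
Definition frobinv (F : finFieldType) (N j : nat) (y : F) : F :=
  y ^+ (2 ^ (N - j)).

Definition lin2 (F : finFieldType) (N : nat) (a : nat -> F) (x : F) : F :=
  \sum_(j < N) a j * x ^+ (2 ^ j).

Definition adj2 (F : finFieldType) (N : nat) (a : nat -> F) (x : F) : F :=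
  \sum_(j < N) frobinv N j (a j * x).

Definition sqrtF (F : finFieldType) (N : nat) (x : F) : F := frobinv N 1 x.

From mathcomp Require Import all_boot all_order all_algebra all_field.
From mathcomp Require Import ring.
Set Implicit Arguments. Unset Strict Implicit. Unset Printing Implicit Defensive.
Import GRing.Theory.
Local Open Scope ring_scope.

(* Write f x = Tr (x ^ (q + 1)) + L x ([trpoly]) and T for the absolute
   trace Tr 1 (m n).  For the nondegenerate form T (x y) the subfield F_q and
   ker Tr are each other's orthogonal complement, L' is the adjoint of L, and
   phi = L' + sqrt is the adjoint of M x = L x + x ^ 2 ([Lsqr]).  The
   polarization
     f (x + c) = f x + f c + Tr (x (c ^ q + c ^ (q ^ (n - 1))))
   together with the fact that, n being odd, c ^ q + c ^ (q ^ (n - 1)) vanishes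
   exactly on F_q (where f coincides with M) shows that f is injective iff
   (A) L c \in F_q forces c \in F_q, and (B) M has no nonzero root in F_q.
   A count shows that (A) also forces L (F_q) \subset F_q.  Dualizing, (A) and
   (B) become L' (ker Tr) = ker Tr and phi being bijective modulo ker Tr; that
   L' is injective on ker Tr comes from the surjectivity of f. *)

Lemma sum_ord_shift_cyclic (R : nmodType) k (g : nat -> R) :
  g k = g 0%N -> \sum_(i < k) g i.+1 = \sum_(i < k) g i.
Proof.
case: k => [|k] gk; first by rewrite !big_ord0.
by rewrite big_ord_recr big_ord_recl /= gk addrC.
Qed.

Section Char2.
Variable R : comNzRingType.
Hypothesis pcharR2 : 2%N \in [pchar R].

Lemma expr2nD k (x y : R) : (x + y) ^+ (2 ^ k) = x ^+ (2 ^ k) + y ^+ (2 ^ k).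
Proof. by apply: exprDn_pchar; rewrite (eq_pnat _ (pcharf_eq pcharR2)) pnatX. Qed.

Lemma expr2n_sum k (I : Type) (r : seq I) (P : pred I) (g : I -> R) :
  (\sum_(i <- r | P i) g i) ^+ (2 ^ k) = \sum_(i <- r | P i) g i ^+ (2 ^ k).
Proof. by apply: (big_morph _ (expr2nD k)); rewrite expr0n expn_eq0. Qed.

Lemma sqrrD_pchar2 (x y : R) : (x + y) ^+ 2 = x ^+ 2 + y ^+ 2.
Proof. by rewrite sqrrD (mulrn_pchar pcharR2) addr0. Qed.

Lemma mulrn_odd_pchar2 (x : R) k : odd k -> x *+ k = x.
Proof.
move=> k_odd; rewrite -(odd_double_half k) k_odd mulrnDr -muln2 mulnC mulrnA.
by rewrite (mulrn_pchar pcharR2) mul0rn addr0.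
Qed.

Lemma additive_inj_in_pchar2 (S : {pred R}) (g : R -> R) :
  {morph g : x y / x + y} -> {in S &, forall x y, x + y \in S} ->
  {in S, forall x, g x = 0 -> x = 0} -> {in S &, injective g}.
Proof.
move=> gD S_add g_ker x y xS yS gxy.
have : x + y = 0 by apply: g_ker; rewrite ?S_add // gD gxy (addrr_pchar2 pcharR2).
by move/eqP; rewrite addr_eq0 (oppr_pchar2 pcharR2) => /eqP.
Qed.

End Char2.

Lemma card_le_image_mul_kernel (V W : finZmodType) (g : V -> W) :
  {morph g : x y / x + y} ->
  (#|V| <= #|[set g x | x : V]| * #|[set x | (g x == 0)%R]|)%N.
Proof.
move=> gD; have gB x y : g (x - y) = g x - g y.
  by apply: (addIr (g y)); rewrite -gD !subrK.
pose s y := odflt 0 [pick z | g z == y].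
have gs x : g (s (g x)) = g x.
  by rewrite /s; case: pickP => [z /eqP //|/(_ x)]; rewrite eqxx.
pose h x := (g x, x - s (g x)).
have h_inj : injective h by move=> x y [gxy]; rewrite gxy => /addIr.
rewrite -cardsX -cardsT -(card_imset _ h_inj); apply: subset_leq_card.
apply/subsetP => _ /imsetP[x _ ->]; rewrite !inE /= gB gs subrr eqxx andbT.
by apply/imsetP; exists x.
Qed.

Lemma card_roots_sum_expn (F : finFieldType) (b k : nat) : (1 < b)%N ->
  (#|[set x : F | (\sum_(i < k.+1) x ^+ (b ^ i) == 0)%R]| <= b ^ k)%N.
Proof.
move=> b_gt1.
have size_p j : size (\sum_(i < j.+1) 'X^(b ^ i) : {poly F}) = (b ^ j).+1.
  elim: j => [|j IHj]; first by rewrite big_ord1 size_polyXn.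
  by rewrite big_ord_recr /= addrC size_polyDl size_polyXn // IHj ltnS ltn_exp2l.
have p_neq0 : \sum_(i < k.+1) 'X^(b ^ i) != 0 :> {poly F}.
  by rewrite -size_poly_eq0 size_p.
rewrite -ltnS -(size_p k) cardE; apply: max_poly_roots => //; last exact: enum_uniq.
apply/allP => x; rewrite mem_enum inE /root horner_sum.
by rewrite (eq_bigr _ (fun i _ => hornerXn _ _)).
Qed.

Definition Fq {F : finFieldType} (m : nat) : {set F} := [set c | c ^+ (2 ^ m) == c].
Definition kerTr {F : finFieldType} (m n : nat) : {set F} := [set x | Tr m n x == 0].

Section RelativeTrace.
Variables (F : finFieldType) (m n : nat).
Hypotheses (m_gt0 : (0 < m)%N) (n_gt0 : (0 < n)%N) (cardF : #|F| = (2 ^ (m * n))%N).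
Local Notation q := (2 ^ m)%N.
Local Notation K := (@kerTr F m n).

Lemma pchar2F : 2%N \in [pchar F]. Proof. exact: card_finPcharP cardF isT. Qed.

Lemma expr_qn (x : F) : x ^+ (q ^ n) = x.
Proof. by rewrite -expnM -cardF expf_card. Qed.

Lemma q_gt1 : (1 < q)%N. Proof. by rewrite -{1}(expn0 2) ltn_exp2l. Qed.

Lemma qn_split : (q ^ n = q * q ^ n.-1)%N. Proof. by rewrite -expnS prednK. Qed.

Lemma TrD : {morph @Tr F m n : x y / x + y}.
Proof.
move=> x y; rewrite /Tr -big_split; apply: eq_bigr => i _.
by rewrite -expnM (expr2nD pchar2F).
Qed.

Lemma Tr0 : Tr m n (0 : F) = 0.
Proof. by rewrite /Tr big1 // => i _; rewrite expr0n !expn_eq0. Qed.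

Lemma TrB (x y : F) : Tr m n (x - y) = Tr m n x - Tr m n y.
Proof. by rewrite !(oppr_pchar2 pchar2F) TrD. Qed.

Lemma Tr_sum (I : Type) (r : seq I) (P : pred I) (g : I -> F) :
  Tr m n (\sum_(i <- r | P i) g i) = \sum_(i <- r | P i) Tr m n (g i).
Proof. exact: (big_morph _ TrD Tr0). Qed.

Lemma kerTrD (x y : F) : x \in K -> y \in K -> x + y \in K.
Proof. by rewrite !inE TrD => /eqP-> /eqP->; rewrite addr0. Qed.

Lemma Tr_expq (x : F) : Tr m n (x ^+ q) = Tr m n x.
Proof.
rewrite /Tr; under eq_bigr do rewrite -exprM -expnS.
by rewrite (@sum_ord_shift_cyclic _ _ (fun i => x ^+ (q ^ i))) // expr_qn expr1.
Qed.

Lemma Tr_expqX k (x : F) : Tr m n (x ^+ (q ^ k)) = Tr m n x.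
Proof. by elim: k => [|k IHk]; rewrite ?expr1 // expnSr exprM Tr_expq. Qed.

Lemma invariant_expq_mul (t : F -> F) : (forall u, t (u ^+ q) = t u) ->
  forall x y, t (x ^+ q * y) = t (x * y ^+ (q ^ n.-1)).
Proof.
move=> t_expq x y; rewrite -[RHS]t_expq exprMn -exprM -expnSr prednK //.
by rewrite expr_qn.
Qed.

Lemma FqP (c : F) : reflect (c ^+ q = c) (c \in Fq m).
Proof. by rewrite inE; apply: eqP. Qed.

Lemma Fq0 : (0 : F) \in Fq m.
Proof. by rewrite inE expr0n expn_eq0. Qed.

Lemma Fq_mul (c d : F) : c \in Fq m -> d \in Fq m -> c * d \in Fq m.
Proof. by move=> /FqP cq /FqP dq; apply/FqP; rewrite exprMn cq dq. Qed.

Lemma Fq_inv (c : F) : c \in Fq m -> c^-1 \in Fq m.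
Proof. by move=> /FqP cq; apply/FqP; rewrite exprVn cq. Qed.

Lemma Fq_addl (t u : F) : t \in Fq m -> (t + u \in Fq m) = (u \in Fq m).
Proof. by move=> /FqP tq; rewrite !inE (expr2nD pchar2F) tq (inj_eq (addrI t)). Qed.

Lemma Fq_expqX (c : F) k : c \in Fq m -> c ^+ (q ^ k) = c.
Proof.
move=> /FqP cq; elim: k => [|k IHk]; first by rewrite expr1.
by rewrite expnSr exprM IHk cq.
Qed.

Lemma Tr_in_Fq (x : F) : Tr m n x \in Fq m.
Proof.
apply/FqP; rewrite /Tr (expr2n_sum pchar2F).
under eq_bigr do rewrite -exprM -expnSr.
by rewrite (@sum_ord_shift_cyclic _ _ (fun i => x ^+ (q ^ i))) // expr_qn expr1.
Qed.

Lemma Tr_Fq (c : F) : c \in Fq m -> Tr m n c = c *+ n.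
Proof.
move=> cFq; rewrite /Tr; under eq_bigr do rewrite Fq_expqX //.
by rewrite sumr_const card_ord.
Qed.

Lemma Tr_scale (c x : F) : c \in Fq m -> Tr m n (c * x) = c * Tr m n x.
Proof.
move=> cFq; rewrite /Tr mulr_sumr; apply: eq_bigr => i _.
by rewrite exprMn (Fq_expqX _ cFq).
Qed.

Lemma card_Fq : (#|@Fq F m| <= q)%N.
Proof.
have -> : Fq m = [set x : F | \sum_(i < 2) x ^+ (q ^ i) == 0].
  apply/setP => x; rewrite !inE big_ord_recr big_ord1 /= expr1 addrC.
  by rewrite -[x in _ + x](oppr_pchar2 pchar2F) subr_eq0.
exact: card_roots_sum_expn q_gt1.
Qed.

Lemma card_kerTr : (#|K| <= q ^ n.-1)%N.
Proof. by have := @card_roots_sum_expn F _ n.-1 q_gt1; rewrite prednK. Qed.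

Lemma Tr_nondeg (w : F) : (forall z, Tr m n (z * w) = 0) -> w = 0.
Proof.
move=> Tw0; apply/eqP; move: card_kerTr; apply: contraLR => w_neq0.
have -> : K = [set: F].
  by apply/setP => x; rewrite !inE -(divfK w_neq0 x) Tw0 eqxx.
by rewrite -ltnNge cardsT cardF expnM qn_split ltn_Pmull ?expn_gt0 ?q_gt1.
Qed.

Section AdditiveMap.
Variable g : F -> F.
Hypothesis gD : {morph g : x y / x + y}.

Lemma additive_onto_Fq : (forall x, g x \in Fq m) ->
  (#|[set x | (g x == 0)%R]| <= q ^ n.-1)%N -> forall c, c \in Fq m -> exists x, g x = c.
Proof.
move=> gFq ker_le.
have img_ge : (q <= #|[set g x | x : F]|)%N.
  have := leq_trans (card_le_image_mul_kernel gD) (leq_mul (leqnn _) ker_le).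
  by rewrite cardF expnM qn_split leq_pmul2r ?expn_gt0.
have img_eq : [set g x | x : F] = Fq m.
  apply/eqP; rewrite eqEcard (leq_trans card_Fq img_ge) andbT.
  by apply/subsetP => _ /imsetP[x _ ->].
by move=> c; rewrite -img_eq => /imsetP[x _ ->]; exists x.
Qed.

Lemma additive_kernel_ge : (forall x, g x \in K) -> (q <= #|[set x | (g x == 0)%R]|)%N.
Proof.
move=> gK; have img_le : (#|[set g x | x : F]| <= q ^ n.-1)%N.
  apply: leq_trans card_kerTr; apply: subset_leq_card.
  by apply/subsetP => _ /imsetP[x _ ->].
have := leq_trans (card_le_image_mul_kernel gD) (leq_mul img_le (leqnn _)).
by rewrite cardF expnM qn_split mulnC leq_pmul2l ?expn_gt0.
Qed.

End AdditiveMap.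

Lemma onto_mod_kerTr (g : F -> F) : {morph g : x y / x + y} ->
  (forall z, g z \in K -> z \in K) -> forall y, exists x, g x - y \in K.
Proof.
move=> gD g_preim y.
have TrgD : {morph Tr m n \o g : x z / x + z} by move=> x z; rewrite /= gD TrD.
have ker_le : (#|[set x | (Tr m n (g x) == 0)%R]| <= q ^ n.-1)%N.
  apply: leq_trans card_kerTr; apply: subset_leq_card.
  by apply/subsetP => x Tgx; apply: g_preim; rewrite !inE in Tgx *.
have [x /= Trgx] := additive_onto_Fq TrgD (fun x => Tr_in_Fq (g x)) ker_le (Tr_in_Fq y).
by exists x; rewrite inE TrB Trgx subrr.
Qed.

Lemma Tr_onto (c : F) : c \in Fq m -> exists x, Tr m n x = c.
Proof. exact: additive_onto_Fq TrD Tr_in_Fq card_kerTr c. Qed.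

End RelativeTrace.

Section AbsoluteTrace.
Variables (F : finFieldType) (N : nat).
Hypotheses (N_gt0 : (0 < N)%N) (cardF : #|F| = (2 ^ N)%N).
Local Notation T := (@Tr F 1 N).

Let cardF1 : #|F| = (2 ^ (1 * N))%N. Proof. by rewrite mul1n. Qed.
Let pcharF2 : 2%N \in [pchar F] := pchar2F cardF1.

Lemma absTr_exp2 k (x : F) : T (x ^+ (2 ^ k)) = T x.
Proof. by have := Tr_expqX cardF1 k x; rewrite expn1. Qed.

Lemma absTr_nondeg (w : F) : (forall z, T (z * w) = 0) -> w = 0.
Proof. exact: Tr_nondeg. Qed.

Lemma lin2D (a : nat -> F) : {morph lin2 N a : x y / x + y}.
Proof.
move=> x y; rewrite /lin2 -big_split; apply: eq_bigr => j _.
by rewrite (expr2nD pcharF2) mulrDr.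
Qed.

Lemma adj2D (a : nat -> F) : {morph adj2 N a : x y / x + y}.
Proof.
move=> x y; rewrite /adj2 -big_split; apply: eq_bigr => j _.
by rewrite /frobinv mulrDr (expr2nD pcharF2).
Qed.

Lemma sqrtFD : {morph @sqrtF F N : x y / x + y}.
Proof. by move=> x y; rewrite /sqrtF /frobinv (expr2nD pcharF2). Qed.

Lemma absTr_lin2_adj (a : nat -> F) x y : T (lin2 N a x * y) = T (x * adj2 N a y).
Proof.
rewrite /lin2 /adj2 mulr_suml mulr_sumr !(Tr_sum cardF1); apply: eq_bigr => j _.
rewrite -(absTr_exp2 (N - j)) /frobinv !exprMn -exprM -expnD.
by rewrite subnKC ?(ltnW (ltn_ord j)) // -cardF expf_card mulrCA mulrA.
Qed.

Lemma absTr_sqr_adj (x y : F) : T (x ^+ 2 * y) = T (x * sqrtF N y).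
Proof.
rewrite /sqrtF /frobinv -[RHS](absTr_exp2 1) expn1 exprMn -exprM -expnSr.
by rewrite subn1 prednK // -cardF expf_card.
Qed.

End AbsoluteTrace.

Section TraceDuality.
Variables (F : finFieldType) (m n : nat).
Hypotheses (m_gt0 : (0 < m)%N) (n_odd : odd n) (cardF : #|F| = (2 ^ (m * n))%N).
Local Notation N := (m * n)%N.
Local Notation T := (@Tr F 1 N).
Local Notation q := (2 ^ m)%N.
Local Notation K := (@kerTr F m n).

Let n_gt0 : (0 < n)%N := odd_gt0 n_odd.
Let N_gt0 : (0 < N)%N. Proof. by rewrite muln_gt0 m_gt0. Qed.
Let cardF1 : #|F| = (2 ^ (1 * N))%N. Proof. by rewrite mul1n. Qed.
Let pcharF2 : 2%N \in [pchar F] := pchar2F cardF.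

Lemma absTr_Tr (x : F) : T (Tr m n x) = T x.
Proof.
rewrite [Tr m n x]/Tr (Tr_sum cardF1); under eq_bigr do rewrite -expnM (absTr_exp2 cardF).
by rewrite sumr_const card_ord (mulrn_odd_pchar2 pcharF2).
Qed.

Lemma absTr_Fq_kerTr (c k : F) : c \in Fq m -> k \in K -> T (c * k) = 0.
Proof.
by move=> cFq; rewrite inE => /eqP Trk; rewrite -absTr_Tr Tr_scale // Trk mulr0 Tr0.
Qed.

Lemma mem_kerTr_ortho (y : F) : (forall c, c \in Fq m -> T (c * y) = 0) -> y \in K.
Proof.
move=> y_ortho; rewrite inE; apply: contraT => Try_neq0.
have T_eq0 x : T (x * 1) = 0.
  have cFq : Tr m n x / Tr m n y \in Fq m by rewrite Fq_mul ?Fq_inv ?(Tr_in_Fq cardF).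
  rewrite mulr1 -absTr_Tr -(divfK Try_neq0 (Tr m n x)) -Tr_scale //.
  by rewrite absTr_Tr y_ortho.
by have /eqP := absTr_nondeg N_gt0 cardF T_eq0; rewrite oner_eq0.
Qed.

Lemma mem_Fq_ortho (y : F) : (forall k, k \in K -> T (k * y) = 0) -> y \in Fq m.
Proof.
move=> y_ortho.
have y_fix : y ^+ (q ^ n.-1) = y.
  apply/eqP; rewrite -subr_eq0; apply/eqP.
  apply: (absTr_nondeg N_gt0 cardF) => z.
  have zK : z ^+ q + z \in K.
    by rewrite inE (TrD cardF) (Tr_expq cardF) (addrr_pchar2 pcharF2).
  rewrite mulrBr (TrB cardF1) (oppr_pchar2 pcharF2).
  rewrite -(invariant_expq_mul n_gt0 cardF (absTr_exp2 cardF m)).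
  by rewrite -(TrD cardF1) -mulrDl y_ortho.
by apply/FqP; rewrite -{1}y_fix -exprM -expnSr prednK // (expr_qn cardF).
Qed.

Section AdjointPair.
Variables g g' : F -> F.
Hypothesis g_adj : forall x y, T (g x * y) = T (x * g' y).

Lemma adj_Fq_kerTr : [set g x | x in Fq m] \subset Fq m -> [set g' x | x in K] \subset K.
Proof.
move=> /subsetP gFq; apply/subsetP => _ /imsetP[b bK ->]; apply: mem_kerTr_ortho => c cFq.
by rewrite -g_adj absTr_Fq_kerTr // gFq // imset_f.
Qed.

Lemma adj_preim_Fq c : K \subset [set g' x | x in K] -> g c \in Fq m -> c \in Fq m.
Proof.
move=> /subsetP Kg' gcFq; apply: mem_Fq_ortho => k /Kg' /imsetP[b bK ->].
by rewrite mulrC -g_adj absTr_Fq_kerTr.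
Qed.

Lemma adj_preim_kerTr z : Fq m \subset [set g x | x in Fq m] -> g' z \in K -> z \in K.
Proof.
move=> /subsetP Fq_g g'zK; apply: mem_kerTr_ortho => c /Fq_g /imsetP[d dFq ->].
by rewrite g_adj absTr_Fq_kerTr.
Qed.

Lemma adj_inj_Fq c : (forall y, exists x, g' x - y \in K) ->
  c \in Fq m -> g c = 0 -> c = 0.
Proof.
move=> g'_onto cFq gc0; apply: (absTr_nondeg N_gt0 cardF) => z.
have [x g'xzK] := g'_onto z.
rewrite -(subKr (g' x) z) mulrBl (TrB cardF1) mulrC -g_adj gc0 mul0r Tr0.
by rewrite mulrC absTr_Fq_kerTr // subrr.
Qed.

End AdjointPair.

End TraceDuality.

Section TracePermutation.
Variables (F : finFieldType) (m n : nat) (a : nat -> F).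
Hypotheses (m_gt0 : (0 < m)%N) (n_odd : odd n) (cardF : #|F| = (2 ^ (m * n))%N).
Local Notation q := (2 ^ m)%N.
Local Notation N := (m * n)%N.
Local Notation T := (@Tr F 1 N).
Local Notation K := (@kerTr F m n).
Local Notation L := (lin2 N a).
Local Notation Lp := (adj2 N a).

Let n_gt0 : (0 < n)%N := odd_gt0 n_odd.
Let N_gt0 : (0 < N)%N. Proof. by rewrite muln_gt0 m_gt0. Qed.
Let cardF1 : #|F| = (2 ^ (1 * N))%N. Proof. by rewrite mul1n. Qed.
Let pcharF2 : 2%N \in [pchar F] := pchar2F cardF.

Definition trpoly (x : F) := Tr m n (x ^+ q.+1) + L x.
Definition Lsqr (x : F) := L x + x ^+ 2.
Definition phi (x : F) := Lp x + sqrtF N x.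
Definition polar (c : F) := c ^+ q + c ^+ (q ^ n.-1).

Lemma LsqrD : {morph Lsqr : x y / x + y}.
Proof. by move=> x y; rewrite /Lsqr (lin2D cardF) (sqrrD_pchar2 pcharF2) addrACA. Qed.

Lemma phiD : {morph phi : x y / x + y}.
Proof. by move=> x y; rewrite /phi (adj2D cardF) (sqrtFD cardF) addrACA. Qed.

Lemma Lsqr_adj x y : T (Lsqr x * y) = T (x * phi y).
Proof.
rewrite /Lsqr /phi mulrDl mulrDr !(TrD cardF1) (absTr_lin2_adj cardF).
by rewrite (absTr_sqr_adj N_gt0 cardF).
Qed.

Lemma trpolyD x c : trpoly (x + c) = trpoly x + trpoly c + Tr m n (x * polar c).
Proof.
have Tr_cross : Tr m n (c * x ^+ q) = Tr m n (x * c ^+ (q ^ n.-1)).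
  by rewrite mulrC (invariant_expq_mul n_gt0 cardF (Tr_expq cardF)).
rewrite /trpoly /polar (lin2D cardF) !exprS (expr2nD pcharF2) mulrDl !mulrDr.
by rewrite !(TrD cardF) Tr_cross; ring.
Qed.

Lemma trpoly_eq_shift x c :
  (trpoly (x + c) == trpoly x) = (trpoly c == Tr m n (x * polar c)).
Proof.
rewrite trpolyD -addrA -[X in _ == X]addr0 (inj_eq (addrI _)) addr_eq0.
by rewrite (oppr_pchar2 pcharF2).
Qed.

Lemma polar_eq0 c : (polar c == 0) = (c \in Fq m).
Proof.
apply/idP/idP => [|cFq]; last first.
  have /FqP cq := cFq.
  by rewrite /polar (Fq_expqX _ cFq) cq (addrr_pchar2 pcharF2).
rewrite /polar addr_eq0 (oppr_pchar2 pcharF2) => /eqP cq.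
have cq2 : c ^+ (q ^ 2) = c.
  by rewrite expnS expn1 exprM cq -exprM -expnSr prednK // (expr_qn cardF).
have c_even k : c ^+ (q ^ (2 * k)) = c.
  by elim: k => [|k IHk]; rewrite ?expr1 // mulnS expnD exprM cq2 IHk.
have n_eq : n = (2 * n./2).+1 by rewrite mul2n -[LHS]odd_double_half n_odd.
by apply/FqP; rewrite -{2}(expr_qn cardF c) n_eq expnSr exprM c_even.
Qed.

Lemma trpoly0 : trpoly 0 = 0.
Proof.
rewrite /trpoly expr0n Tr0 add0r /lin2 big1 // => j _.
by rewrite expr0n expn_eq0 mulr0.
Qed.

Lemma trpoly_Fq c : c \in Fq m -> trpoly c = Lsqr c.
Proof.
move=> cFq; have /FqP cq := cFq; have c2Fq : c ^+ 2 \in Fq m by rewrite expr2 Fq_mul.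
rewrite /trpoly /Lsqr exprS cq -expr2 Tr_Fq //.
by rewrite (mulrn_odd_pchar2 pcharF2) // addrC.
Qed.

Lemma lin2_preim_Fq : injective trpoly -> forall c, L c \in Fq m -> c \in Fq m.
Proof.
move=> trpoly_inj c LcFq; rewrite -polar_eq0; apply: contraT => polar_neq0.
have [x0 Trx0] : exists x0, Tr m n x0 = trpoly c.
  by apply: (Tr_onto m_gt0 n_gt0 cardF); rewrite /trpoly (Fq_addl cardF) ?Tr_in_Fq.
pose x := x0 / polar c.
have /eqP collide : trpoly (x + c) == trpoly x.
  by rewrite trpoly_eq_shift /x divfK // Trx0.
have c0 : c = 0 by apply: (addrI x); rewrite addr0; apply: trpoly_inj.
by rewrite c0 polar_eq0 Fq0 in polar_neq0.
Qed.

Lemma Lsqr_inj_Fq : injective trpoly -> forall c, c \in Fq m -> Lsqr c = 0 -> c = 0.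
Proof.
by move=> trpoly_inj c cFq Lsqr_c0; apply: trpoly_inj; rewrite trpoly0 trpoly_Fq.
Qed.

Lemma inj_trpoly : (forall c, L c \in Fq m -> c \in Fq m) ->
  (forall c, c \in Fq m -> Lsqr c = 0 -> c = 0) -> injective trpoly.
Proof.
move=> L_preim Lsqr_inj x y fxy; pose c := y - x.
have : trpoly (x + c) == trpoly x by rewrite /c addrC subrK fxy.
rewrite trpoly_eq_shift => /eqP fc.
have cFq : c \in Fq m.
  apply: L_preim; have : trpoly c \in Fq m by rewrite fc Tr_in_Fq.
  by rewrite /trpoly (Fq_addl cardF) // Tr_in_Fq.
have c0 : c = 0.
  apply: Lsqr_inj => //; rewrite -trpoly_Fq // fc.
  by move: cFq; rewrite -polar_eq0 => /eqP->; rewrite mulr0 Tr0.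
by apply/eqP; rewrite eq_sym -subr_eq0 -/c c0.
Qed.

Lemma lin2_Fq : (forall c, L c \in Fq m -> c \in Fq m) ->
  [set L x | x in Fq m] \subset Fq m.
Proof.
(* The kernel of [L ^ q + L] is L^-1 (F_q), hence inside F_q, and has at least q
   elements because [L ^ q + L] takes values in ker Tr. *)
move=> L_preim; pose g x := L x ^+ q + L x.
have gD : {morph g : x y / x + y}.
  by move=> x y; rewrite /g (lin2D cardF) (expr2nD pcharF2) addrACA.
have gK x : g x \in K by rewrite inE (TrD cardF) (Tr_expq cardF) (addrr_pchar2 pcharF2).
have ker_g : [set x | (g x == 0)%R] = Fq m.
  apply/eqP; rewrite eqEcard andbC.
  rewrite (leq_trans (card_Fq m_gt0 cardF) (additive_kernel_ge m_gt0 n_gt0 cardF gD gK)).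
  apply/subsetP => x; rewrite !inE /g addr_eq0 (oppr_pchar2 pcharF2).
  by have := L_preim x; rewrite !inE.
apply/subsetP => _ /imsetP[c cFq ->].
have : c \in [set x | (g x == 0)%R] by rewrite ker_g.
by rewrite !inE /g addr_eq0 (oppr_pchar2 pcharF2).
Qed.

Lemma adj2_inj_kerTr : (forall z, exists x, trpoly x = z) ->
  forall b, b \in K -> Lp b = 0 -> b = 0.
Proof.
(* b is orthogonal to every value of trpoly: to its Tr-part because b is in
   ker Tr, and to its L-part by adjunction. *)
move=> trpoly_onto b bK Lpb0; apply: (absTr_nondeg N_gt0 cardF) => z.
have [x <-] := trpoly_onto z.
rewrite /trpoly mulrDl (TrD cardF1) (absTr_Fq_kerTr n_odd cardF) ?Tr_in_Fq //.
by rewrite add0r (absTr_lin2_adj cardF) Lpb0 mulr0 Tr0.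
Qed.

Lemma adj2_kerTr_eq : [set L x | x in Fq m] \subset Fq m ->
  (forall z, exists x, trpoly x = z) -> [set Lp x | x in K] = K.
Proof.
move=> LFq trpoly_onto.
have Lp_inj : {in K &, injective Lp}.
  apply: (additive_inj_in_pchar2 pcharF2 (adj2D cardF a)) => [x y|].
    exact: kerTrD.
  exact: adj2_inj_kerTr.
apply/eqP; rewrite eqEcard card_in_imset // leqnn andbT.
exact: (adj_Fq_kerTr m_gt0 n_odd cardF (absTr_lin2_adj cardF a) LFq).
Qed.

Lemma Lsqr_Fq_eq : [set L x | x in Fq m] \subset Fq m ->
  (forall c, c \in Fq m -> Lsqr c = 0 -> c = 0) -> [set Lsqr x | x in Fq m] = Fq m.
Proof.
move=> /subsetP LFq Lsqr_ker.
have Lsqr_inj : {in Fq m &, injective Lsqr}.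
  apply: (additive_inj_in_pchar2 pcharF2 LsqrD) => // x y xFq yFq.
  by rewrite (Fq_addl cardF).
apply/eqP; rewrite eqEcard card_in_imset // leqnn andbT.
apply/subsetP => _ /imsetP[d dFq ->].
have d2Fq : d ^+ 2 \in Fq m by rewrite expr2 Fq_mul.
by rewrite /Lsqr (Fq_addl cardF) // LFq ?imset_f.
Qed.

Definition adj_criterion : Prop :=
  [set Lp x | x in K] = K /\
  (forall x y, x - y \in K -> phi x - phi y \in K) /\
  (forall x y, phi x - phi y \in K -> x - y \in K) /\
  (forall y, exists x, phi x - y \in K).

Lemma adj_criterion_of_bij : bijective trpoly -> adj_criterion.
Proof.
move=> trpoly_bij; have trpoly_inj := bij_inj trpoly_bij.
have trpoly_onto z : exists x, trpoly x = z.
  by have [h _ hK] := trpoly_bij; exists (h z).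
have LFq := lin2_Fq (lin2_preim_Fq trpoly_inj).
have LsqrFq := Lsqr_Fq_eq LFq (Lsqr_inj_Fq trpoly_inj).
have /subsetP phiK : [set phi x | x in K] \subset K.
  by apply: (adj_Fq_kerTr m_gt0 n_odd cardF Lsqr_adj); rewrite LsqrFq.
have phi_preim z : phi z \in K -> z \in K.
  by apply: (adj_preim_kerTr m_gt0 n_odd cardF Lsqr_adj); rewrite LsqrFq.
split; first exact: adj2_kerTr_eq.
split; [|split].
- by move=> x y; rewrite !(oppr_pchar2 pcharF2) -phiD => xyK; apply/phiK/imset_f.
- by move=> x y; rewrite !(oppr_pchar2 pcharF2) -phiD; apply: phi_preim.
- exact: onto_mod_kerTr m_gt0 n_gt0 cardF _ phiD phi_preim.
Qed.

Lemma bij_of_adj_criterion : adj_criterion -> bijective trpoly.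
Proof.
move=> [LpK [_ [_ phi_onto]]]; apply: injF_bij; apply: inj_trpoly => c.
- by apply: (adj_preim_Fq m_gt0 n_odd cardF (absTr_lin2_adj cardF a)); rewrite LpK.
- exact: (adj_inj_Fq m_gt0 n_odd cardF Lsqr_adj).
Qed.

End TracePermutation.

Theorem mainTheorem7 (F : finFieldType) (m n : nat) (a : nat -> F) :
  (0 < m)%N -> odd n -> #|F| = (2 ^ (m * n))%N ->
  let K := [set x : F | Tr m n x == 0] in
  let Lp := adj2 (m * n) a in
  let phi := fun x : F => Lp x + sqrtF (m * n) x in
  bijective (fun x : F => Tr m n (x ^+ (2 ^ m).+1) + lin2 (m * n) a x)
  <->
  ( [set Lp x | x in K] = K /\
    (* phi induces a well-defined map  K + alpha |-> K + phi(alpha)  on F/K *)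
    (forall x y : F, x - y \in K -> phi x - phi y \in K) /\
    (* ... which is injective on F/K *)
    (forall x y : F, phi x - phi y \in K -> x - y \in K) /\
    (* ... and surjective on F/K *)
    (forall y : F, exists x : F, phi x - y \in K) ).
Proof.
move=> m_gt0 n_odd cardF.
exact: (conj (@adj_criterion_of_bij F m n a m_gt0 n_odd cardF)
             (@bij_of_adj_criterion F m n a m_gt0 n_odd cardF)).
Qed.
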